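(* Let $n=p^a$ with $p$ prime and $a\in\mathbb{N}$. Then the number of distinct $n\times n$ principal reversible squares is $N_n=\binom{2a-1}{a}$.
   Context: A reversible square matrix is a real matrix $M=(M_{i,j})$ with indices $i,j\in\mathbb{Z}_n=\mathbb{Z}/n\mathbb{Z}$ (top-left entry index $(1,1)$, indices computed modulo $n$) such that (R) $M_{i,j}+M_{i,n+1-j}=M_{i,k}+M_{i,n+1-k}$ and $M_{i,j}+M_{n+1-i,j}=M_{k,j}+M_{n+1-k,j}$ for all $i,j,k$, and (V) $M_{i,j}+M_{k,l}=M_{i,l}+M_{k,j}$ for all $i,j,k,l$. An $n\times n$ principal reversible square is a reversible square matrix whose set of entries is exactly $\{1,\dots,n^2\}$, whose entries increase along each row and each column, and with $M_{1,1}=1$, $M_{1,2}=2$. *)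

(* Indices: paper index i in {1..n} corresponds to the
   ordinal i-1 : 'I_n; the paper's n+1-j corresponds to rev_ord j. *)
From mathcomp Require Import all_boot all_order all_algebra.
From mathcomp Require Import reals.
Set Implicit Arguments. Unset Strict Implicit. Unset Printing Implicit Defensive.
Import Order.TTheory GRing.Theory Num.Theory.
Local Open Scope ring_scope.

Section RevSq.
Variables (R : realType) (n : nat).

Definition rev_cond (M : 'M[R]_n) : Prop :=
  (forall i j k : 'I_n, M i j + M i (rev_ord j) = M i k + M i (rev_ord k)) /\
  (forall i j k : 'I_n, M i j + M (rev_ord i) j = M k j + M (rev_ord k) j).

Definition vert_cond (M : 'M[R]_n) : Prop :=
  forall i j k l : 'I_n, M i j + M k l = M i l + M k j.

Definition reversible_square (M : 'M[R]_n) : Prop := rev_cond M /\ vert_cond M.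

Definition principal_reversible_square (M : 'M[R]_n) : Prop :=
  reversible_square M /\
  [/\
      (forall i j : 'I_n, exists m : nat, (1 <= m <= n ^ 2)%N /\ M i j = m%:R),
      (forall m : nat, (1 <= m <= n ^ 2)%N -> exists i j : 'I_n, M i j = m%:R),
      (forall (i j k : 'I_n), (j < k)%N -> M i j < M i k) /\
      (forall (i j k : 'I_n), (i < k)%N -> M i j < M k j),
      (forall i j : 'I_n, val i = 0%N -> val j = 0%N -> M i j = 1) &
      (* M_{1,2} = 2 (paper indices, taken modulo n) *)
      (forall i j : 'I_n, val i = 0%N -> val j = (1 %% n)%N -> M i j = 2)].

End RevSq.

From mathcomp Require Import all_boot all_order all_algebra.
From mathcomp Require Import reals.
From mathcomp Require Import zify.
Import Order.TTheory GRing.Theory Num.Theory.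
Set Implicit Arguments. Unset Strict Implicit. Unset Printing Implicit Defensive.

(* Condition (V) forces M i j = A_i + B_j + 1 for increasing sequences A and B
   starting at 0; the entry condition then says that A (+) B = {0, ..., n^2 - 1}
   is a direct-sum tiling, and M_{1,2} = 2 puts 1 in B. By de Bruijn's structure
   theorem, if m is the least positive element of A, then m divides every
   element of A and B is a union of blocks [qm, qm + m), so A = m A' and
   B = B' + {0, ..., m - 1} for a tiling A' (+) B' of {0, ..., N/m - 1} with
   1 in A'. For N = p^(x + y) and |A| = p^x this enumerates the tilings
   recursively (m = p^k with k >= 1, the two factors swapping roles); their
   number satisfies a hockey-stick recurrence solved by C(x + y - 1, x), and
   every tiling built this way is symmetric, which is condition (R). *)

(** * Direct-sum tilings of an initial segment *)

Definition tiling (N : nat) (A B : seq nat) : Prop :=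
  [/\ forall a b, a \in A -> b \in B -> a + b < N,
      forall z, z < N -> exists a b, [/\ a \in A, b \in B & z = a + b] &
      forall a b a' b', a \in A -> b \in B -> a' \in A -> b' \in B ->
        a + b = a' + b' -> a = a'].

Definition square_tiling (n : nat) (A B : seq nat) : Prop :=
  [/\ sorted ltn A, sorted ltn B, tiling (n ^ 2) A B, size A = n & size B = n].

Section Tiling.
Variables (N : nat) (A B : seq nat).
Hypothesis tAB : tiling N A B.

Lemma tiling_sym : tiling N B A.
Proof.
case: tAB => lt_AB cover_AB inj_AB; split.
- by move=> b a bB aA; rewrite addnC; apply: lt_AB.
- by move=> z /cover_AB [a [b [aA bB ->]]]; exists b, a; rewrite addnC.
- move=> b a b' a' bB aA b'B a'A e.
  have := inj_AB a b a' b' aA bB a'A b'B; lia.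
Qed.

Lemma tiling_mem0 : 0 < N -> 0 \in A /\ 0 \in B.
Proof.
case: tAB => _ cover_AB _ /cover_AB [a [b [aA bB /esym/eqP]]].
by rewrite addn_eq0 => /andP [/eqP a0 /eqP b0]; rewrite -{1}a0 -b0.
Qed.

Lemma tiling_ltn : 0 < N -> {in A, forall a, a < N} /\ {in B, forall b, b < N}.
Proof.
move=> N_gt0; have [A0 B0] := tiling_mem0 N_gt0; case: tAB => lt_AB _ _.
by split=> [a aA | b bB]; [rewrite -[a]addn0 | rewrite -[b]add0n]; apply: lt_AB.
Qed.

Lemma tiling_size : uniq A -> uniq B -> size A * size B = N.
Proof.
move=> uA uB; case: tAB => lt_AB cover_AB inj_AB.
have uniq_sums : uniq [seq a + b | a <- A, b <- B].
  apply: allpairs_uniq => // [[a b] [a' b']] /allpairsP [[x y] [/= xA yB [-> ->]]].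
  move=> /allpairsP [[x' y'] [/= x'A y'B [-> ->]]] /= e.
  have exx' := inj_AB _ _ _ _ xA yB x'A y'B e.
  by rewrite exx'; congr pair; lia.
have sums_iota : [seq a + b | a <- A, b <- B] =i iota 0 N.
  move=> z; rewrite mem_iota add0n; apply/idP/idP.
  - by move=> /allpairsP [[x y] [/= xA yB ->]]; apply: lt_AB.
  - by move=> /cover_AB [a [b [aA bB ->]]]; apply: allpairs_f.
rewrite -(size_allpairs addn) (perm_size (uniq_perm uniq_sums (iota_uniq 0 N) sums_iota)).
exact: size_iota.
Qed.

End Tiling.

Definition symmetric_set (L : seq nat) : Prop :=
  exists c, forall z, (z \in L) = (z <= c) && (c - z \in L).

Lemma symmetric_set_zero : symmetric_set [:: 0].
Proof. by exists 0 => z; rewrite !inE; case: z. Qed.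

Lemma symmetric_iota n : symmetric_set (iota 0 n).
Proof. by exists n.-1 => z; rewrite !mem_iota !add0n; apply/idP/andP; lia. Qed.

Definition dilate (m : nat) (A : seq nat) : seq nat := [seq q * m | q <- A].

Definition blocks (m N : nat) (B : seq nat) : seq nat :=
  [seq z <- iota 0 (m * N) | z %/ m \in B].

Definition contract (m N : nat) (L : seq nat) : seq nat :=
  [seq q <- iota 0 N | q * m \in L].

Section Dilation.
Variables (m N : nat).
Hypothesis m_gt0 : 0 < m.

Lemma mem_dilate A z : (z \in dilate m A) = (m %| z) && (z %/ m \in A).
Proof.
apply/mapP/andP => [[q qA ->] | [/dvdnP [q ->]]]; rewrite mulnK //.
  by rewrite dvdn_mull.
by exists q.
Qed.

Lemma mem_dilate_mul A q : (q * m \in dilate m A) = (q \in A).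
Proof. by rewrite mem_dilate dvdn_mull // mulnK. Qed.

Lemma size_dilate A : size (dilate m A) = size A.
Proof. exact: size_map. Qed.

Lemma dilate_inj : injective (dilate m).
Proof. by apply: inj_map => q q' /eqP; rewrite eqn_pmul2r // => /eqP. Qed.

Lemma sorted_dilate A : sorted ltn A -> sorted ltn (dilate m A).
Proof. by apply: homo_sorted => q q' /=; rewrite ltn_pmul2r. Qed.

Lemma mem_blocks B z : (z \in blocks m N B) = (z < m * N) && (z %/ m \in B).
Proof. by rewrite mem_filter mem_iota add0n andbC. Qed.

Lemma mem_blocks_mul B q : (q * m \in blocks m N B) = (q < N) && (q \in B).
Proof. by rewrite mem_blocks mulnC ltn_pmul2l // mulKn. Qed.

Lemma sorted_blocks B : sorted ltn (blocks m N B).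
Proof. exact/sorted_filter/iota_ltn_sorted/ltn_trans. Qed.

Lemma tiling_dilate_blocks A B :
  tiling N A B -> tiling (m * N) (dilate m A) (blocks m N B).
Proof.
case=> lt_AB cover_AB inj_AB; split.
- move=> a b; rewrite mem_dilate mem_blocks => /andP [/dvdnP [q ->]].
  rewrite mulnK // => qA /andP [_ bB].
  have : (q + b %/ m).+1 * m <= N * m by rewrite leq_pmul2r // lt_AB.
  have := divn_eq b m; have := ltn_pmod b m_gt0; rewrite mulSn mulnDl; lia.
- move=> z zN; have z_eq := divn_eq z m.
  have /cover_AB [a [b [aA bB e]]] : z %/ m < N by rewrite ltn_divLR // mulnC.
  exists (a * m), (b * m + z %% m); split.
  + by rewrite mem_dilate_mul.
  + rewrite mem_blocks divnMDl // divn_small ?addn0 ?ltn_pmod // bB andbT.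
    by rewrite e in z_eq; lia.
  + by rewrite e mulnDl in z_eq; lia.
- move=> a b a' b'; rewrite !mem_dilate !mem_blocks.
  move=> /andP [/dvdnP [q ->]]; rewrite mulnK // => qA /andP [_ bB].
  move=> /andP [/dvdnP [q' ->]]; rewrite mulnK // => q'A /andP [_ b'B] e.
  have : (q * m + b) %/ m = (q' * m + b') %/ m by rewrite e.
  by rewrite !divnMDl // => /(inj_AB _ _ _ _ qA bB q'A b'B) ->.
Qed.

Lemma symmetric_dilate A : symmetric_set A -> symmetric_set (dilate m A).
Proof.
move=> [c symA]; exists (c * m) => z; rewrite !mem_dilate.
apply/andP/andP => [[/dvdnP [q ->]] | [le_zc /andP [dvd_cz]]].
  rewrite mulnK // symA => /andP [le_qc cqA].
  by rewrite leq_pmul2r // -mulnBl dvdn_mull // mulnK.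
have /dvdnP [q z_eq] : m %| z by rewrite -(dvdn_subr le_zc) // dvdn_mull.
rewrite z_eq leq_pmul2r // in le_zc *.
rewrite -mulnBl mulnK // => cqA.
by rewrite dvdn_mull // mulnK // symA le_zc.
Qed.

Lemma symmetric_blocks B :
  {in B, forall q, q < N} -> symmetric_set B -> symmetric_set (blocks m N B).
Proof.
move=> ltB [c symB]; exists (c * m + m.-1) => z; rewrite !mem_blocks.
have := divn_eq z m; have := ltn_pmod z m_gt0.
move: (z %/ m) (z %% m) => q r lt_rm ->.
have [le_qc | lt_cq] := leqP q c; last first.
  have -> : q \in B = false by rewrite symB leqNgt lt_cq.
  suff -> : (q * m + r <= c * m + m.-1) = false by rewrite andbF.
  have : c.+1 * m <= q * m by rewrite leq_pmul2r.
  rewrite mulSn; lia.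
have le_qm_cm : q * m <= c * m by rewrite leq_pmul2r.
have -> : c * m + m.-1 - (q * m + r) = (c - q) * m + (m.-1 - r).
  by rewrite mulnBl; lia.
rewrite divnMDl // divn_small ?addn0; last by lia.
rewrite [q \in B]symB le_qc /=.
case cqB: (c - q \in B); rewrite ?andbF //=.
have qB : q \in B by rewrite symB le_qc cqB.
have : q.+1 * m <= N * m by rewrite leq_pmul2r // ltB.
have : (c - q).+1 * m <= N * m by rewrite leq_pmul2r // ltB.
rewrite !mulSn; lia.
Qed.

Lemma mem_contract L q : (q \in contract m N L) = (q < N) && (q * m \in L).
Proof. by rewrite mem_filter mem_iota add0n andbC. Qed.

Lemma sorted_contract L : sorted ltn (contract m N L).
Proof. exact/sorted_filter/iota_ltn_sorted/ltn_trans. Qed.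

End Dilation.

(** * De Bruijn's structure theorem *)

Lemma least_pos (A : seq nat) : uniq A -> 1 < size A ->
  exists m, [/\ m \in A, 0 < m & {in A, forall a, 0 < a -> m <= a}].
Proof.
move=> uA szA; have exA : exists a, (0 < a) && (a \in A).
  have /hasP [a aA a_gt0] : has (leq 1) A.
    apply/negPn/negP => /hasPn all0; have : {subset A <= [:: 0]}.
      by move=> a aA; have := all0 a aA; rewrite inE; lia.
    by move/(uniq_leq_size uA); rewrite leqNgt szA.
  by exists a; rewrite a_gt0.
case: (ex_minnP exA) => m /andP [m_gt0 mA] m_min.
by exists m; split=> // a aA a_gt0; apply: m_min; rewrite a_gt0.
Qed.

Section DeBruijn.
Variables (N m : nat) (A B : seq nat).
Hypotheses (tAB : tiling N A B) (A0 : 0 \in A) (B0 : 0 \in B).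
Hypotheses (mA : m \in A) (m_gt0 : 0 < m) (m_min : {in A, forall a, 0 < a -> m <= a}).

Let lt_AB := let: And3 h _ _ := tAB in h.
Let cover_AB := let: And3 _ h _ := tAB in h.
Let inj_AB := let: And3 _ _ h := tAB in h.

Let ltA a : a \in A -> a < N.
Proof. by rewrite -{2}[a]addn0 => aA; apply: lt_AB. Qed.

Section Step.
Variable x : nat.
Hypothesis IH : forall z, z < x ->
  (z \in A -> m %| z) /\ (z < N -> (z \in B) = (z %/ m * m \in B)).
Hypotheses (lt_xN : x < N) (r_gt0 : 0 < x %% m).

Let lt_rm : x %% m < m := ltn_pmod x m_gt0.
Let x_gt0 : 0 < x := leq_trans r_gt0 (leq_mod x m).

Let dvdA z : z < x -> z \in A -> m %| z.
Proof. by move=> /IH []. Qed.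

Let floorB z : z < x -> (z \in B) = (z %/ m * m \in B).
Proof. by move=> lt_zx; apply: (IH lt_zx).2; apply: ltn_trans lt_xN. Qed.

Lemma step_low : x < m -> x \in A = false /\ x \in B.
Proof.
move=> lt_xm; split.
  by apply/negbTE/negP => /m_min /(_ x_gt0); rewrite leqNgt lt_xm.
have [a [b [aA bB x_ab]]] := cover_AB lt_xN.
have [a0 | a_gt0] := posnP a; first by rewrite x_ab a0.
by have := m_min aA a_gt0; lia.
Qed.

Lemma step_floor_in_B : m <= x -> x %/ m * m \in B -> x \in A = false /\ x \in B.
Proof.
move=> le_mx qB; have q_gt0 : 0 < x %/ m by rewrite divn_gt0.
have xA_false : x \in A = false.
  apply/negbTE/negP => xA.
  have mrB : m - x %% m \in B.
    rewrite floorB; last by nia.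
    by rewrite divn_small ?mul0n //; lia.
  have := inj_AB xA mrB mA qB; nia.
split=> //; have [a [b [aA bB x_ab]]] := cover_AB lt_xN.
have [a0 | a_gt0] := posnP a; first by rewrite x_ab a0.
have ne_ax : a != x by apply: contraFneq xA_false => <-.
have lt_ax : a < x by rewrite ltn_neqAle ne_ax /=; lia.
have /dvdnP [k a_eq] := dvdA lt_ax aA.
have bB' : b %/ m * m \in B by rewrite -floorB //; lia.
have q_eq : x %/ m = k + b %/ m by rewrite x_ab a_eq divnMDl.
have := inj_AB aA bB' A0 qB; rewrite q_eq mulnDl -a_eq add0n => /(_ erefl).
lia.
Qed.

Lemma step_floor_split a' b' : a' \in A -> b' \in B -> 0 < a' ->
  x %/ m * m = a' + b' -> [/\ x \in A = false, x \in B = false & x %/ m * m \in B = false].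
Proof.
move=> a'A b'B a'_gt0 q_eq.
have /dvdnP [k a'_eq] : m %| a' by apply: dvdA a'A; lia.
have b'_eq : b' = (x %/ m - k) * m by rewrite mulnBl; lia.
have b'rB : b' + x %% m \in B.
  by rewrite floorB; [rewrite b'_eq divnMDl // (divn_small lt_rm) addn0 -b'_eq | lia].
have x_split : x = a' + (b' + x %% m) by lia.
split; apply/negbTE/negP.
- by move=> xA; have := inj_AB xA B0 a'A b'rB; rewrite addn0 => /(_ x_split); lia.
- by move=> xB; have := inj_AB A0 xB a'A b'rB; rewrite add0n => /(_ x_split); lia.
- by move=> qB; have := inj_AB A0 qB a'A b'B; rewrite add0n => /(_ q_eq); lia.
Qed.

Lemma tiling_step : x \in A = false /\ (x \in B) = (x %/ m * m \in B).
Proof.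
have [lt_xm | le_mx] := ltnP x m.
  by have [-> ->] := step_low lt_xm; rewrite divn_small.
have [a' [b' [a'A b'B q_eq]]] : exists a' b', [/\ a' \in A, b' \in B & x %/ m * m = a' + b'].
  by apply: cover_AB; apply: leq_ltn_trans lt_xN; rewrite leq_trunc_div.
have [a'0 | a'_gt0] := posnP a'.
  have qB : x %/ m * m \in B by rewrite q_eq a'0.
  by have [-> ->] := step_floor_in_B le_mx qB; rewrite qB.
by have [-> -> ->] := step_floor_split a'A b'B a'_gt0 q_eq.
Qed.

End Step.

Lemma tiling_structure x :
  (x \in A -> m %| x) /\ (x < N -> (x \in B) = (x %/ m * m \in B)).
Proof.
elim/ltn_ind: x => x IH.
have [r0 | r_gt0] := posnP (x %% m).
  by split=> [_ | _]; [apply/eqP | rewrite {1}(divn_eq x m) r0 addn0].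
have [lt_xN | le_Nx] := ltnP x N.
  by have [-> ->] := tiling_step IH lt_xN r_gt0.
by split=> // /ltA; rewrite ltnNge le_Nx.
Qed.

Lemma tiling_dvd a : a \in A -> m %| a.
Proof. exact: (tiling_structure a).1. Qed.

Lemma tiling_floor b : b < N -> (b \in B) = (b %/ m * m \in B).
Proof. exact: (tiling_structure b).2. Qed.

Lemma dvdn_tiling : m %| N.
Proof.
have lt_mN := ltA mA; have N_eq := divn_eq N m; have lt_rm := ltn_pmod N m_gt0.
apply/negPn/negP; rewrite /dvdn -lt0n => r_gt0.
have [a [b [aA bB Nab]]] : exists a b, [/\ a \in A, b \in B & N.-1 = a + b].
  by apply: cover_AB; lia.
have /dvdnP [k a_eq] := tiling_dvd aA.
have le_kq : k <= N %/ m by rewrite -ltnS -(ltn_pmul2r m_gt0) mulSn; lia.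
have b_eq : b = (N %/ m - k) * m + (N %% m).-1.
  have : k * m <= N %/ m * m by rewrite leq_pmul2r.
  rewrite mulnBl; lia.
have lt_r1m : (N %% m).-1 < m by lia.
have blockB : (N %/ m - k) * m \in B.
  have lt_bN : b < N by lia.
  by move: bB; rewrite (tiling_floor lt_bN) b_eq divnMDl // (divn_small lt_r1m) addn0.
have [a0 | a_gt0] := posnP a.
  have k0 : k = 0 by apply/eqP; rewrite -(eqn_pmul2r m_gt0) -a_eq a0.
  by have := lt_AB mA blockB; rewrite k0 subn0; lia.
have b1B : b.+1 \in B.
  have lt_b1N : b.+1 < N by lia.
  by rewrite (tiling_floor lt_b1N) b_eq -addnS prednK // divnMDl // (divn_small lt_rm) addn0.
by have := lt_AB aA b1B; lia.
Qed.

Let N_eq : N = m * (N %/ m).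
Proof. by rewrite mulnC divnK // dvdn_tiling. Qed.

Let ltB b : b \in B -> b < N.
Proof. by rewrite -{2}[b]add0n => bB; apply: lt_AB. Qed.

Let lt_div q : (q < N %/ m) = (q * m < N).
Proof. by rewrite {2}N_eq mulnC ltn_pmul2l. Qed.

Lemma dilate_contract : sorted ltn A -> dilate m (contract m (N %/ m) A) = A.
Proof.
move=> sA; apply: (irr_sorted_eq ltn_trans ltnn) => //.
  exact/sorted_dilate/sorted_contract.
move=> z; rewrite mem_dilate // mem_contract lt_div.
apply/and3P/idP => [[/dvdnP [q ->]] | zA]; first by rewrite mulnK // => _ /andP [].
by rewrite tiling_dvd // divnK ?tiling_dvd // ltA.
Qed.

Lemma blocks_contract : sorted ltn B -> blocks m (N %/ m) (contract m (N %/ m) B) = B.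
Proof.
move=> sB; apply: (irr_sorted_eq ltn_trans ltnn (sorted_blocks _ _ _)) => // z.
rewrite mem_blocks mem_contract lt_div -N_eq.
apply/andP/idP => [[lt_zN /andP [_ zB]] | zB]; first by rewrite tiling_floor.
have lt_zN := ltB zB.
by rewrite lt_zN -tiling_floor // zB (leq_ltn_trans (leq_trunc_div z m)).
Qed.

Lemma tiling_contract : tiling (N %/ m) (contract m (N %/ m) A) (contract m (N %/ m) B).
Proof.
split.
- move=> q q'; rewrite !mem_contract => /andP [_ qA] /andP [_ q'B].
  by rewrite lt_div mulnDl lt_AB.
- move=> z; rewrite lt_div => /cover_AB [a [b [aA bB zm_eq]]].
  have /dvdnP [k a_eq] := tiling_dvd aA.
  have le_kz : k <= z by rewrite -(leq_pmul2r m_gt0); lia.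
  have b_eq : b = (z - k) * m by rewrite mulnBl; lia.
  exists k, (z - k); rewrite !mem_contract !lt_div -a_eq -b_eq aA bB !andbT.
  by split; [apply: ltA | apply: ltB | lia].
- move=> q q' r r'; rewrite !mem_contract.
  move=> /andP [_ qA] /andP [_ q'B] /andP [_ rA] /andP [_ r'B] e.
  have : q * m = r * m by apply: (inj_AB qA q'B rA r'B); rewrite -!mulnDl e.
  by move/eqP; rewrite eqn_pmul2r // => /eqP.
Qed.

Lemma size_contract : sorted ltn A -> sorted ltn B ->
  m * (size A * size (contract m (N %/ m) B)) = N.
Proof.
move=> sA sB; rewrite [RHS]N_eq -{1}(dilate_contract sA) size_dilate.
congr (m * _); apply: tiling_size tiling_contract _ _;
exact: (sorted_uniq ltn_trans ltnn (sorted_contract _ _ _)).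
Qed.

End DeBruijn.

(** * Tilings of prime-power size *)

Lemma hockey_stick x y : sumn [seq 'C(j + x, j) | j <- iota 0 y] = 'C(x + y, x.+1).
Proof.
elim: y => [|y IH]; first by rewrite addn0 bin_small.
rewrite -addn1 iotaD map_cat sumn_cat IH /= add0n addn0 addn1 addnS binS.
by rewrite [x + y]addnC -(bin_sub (leq_addl y x)) addnK.
Qed.

Section PrimePowerTilings.
Variable p : nat.
Hypothesis p_prime : prime p.

Let pexpn_gt0 k : 0 < p ^ k.
Proof. by rewrite expn_gt0 prime_gt0. Qed.

Let pexpn_gt1 k : 0 < k -> 1 < p ^ k.
Proof. by move=> k_gt0; rewrite -[1](expn0 p) ltn_exp2l ?prime_gt1. Qed.

Definition ptiling x y (A B : seq nat) : Prop :=
  [/\ sorted ltn A, sorted ltn B, tiling (p ^ (x + y)) A B, size A = p ^ x & 1 \in B].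

(* [p ^ (y - j)] is the least positive element of A, and the two factors swap
   roles in the recursive call; x + y decreases strictly along the recursion,
   so any [fuel >= x + y] suffices. *)
Fixpoint ptilings (fuel x y : nat) : seq (seq nat * seq nat) :=
  match x, fuel with
  | 0, _ => [:: ([:: 0], iota 0 (p ^ y))]
  | _.+1, 0 => [::]
  | _.+1, fuel.+1 =>
    [seq (dilate (p ^ (y - j)) BA.2, blocks (p ^ (y - j)) (p ^ (j + x)) BA.1)
       | j <- iota 0 y, BA <- ptilings fuel j x]
  end.

Lemma ptiling_size2 x y A B : ptiling x y A B -> size B = p ^ y.
Proof.
case=> sA sB tAB szA _.
have := tiling_size tAB (sorted_uniq ltn_trans ltnn sA) (sorted_uniq ltn_trans ltnn sB).
by rewrite szA expnD => /eqP; rewrite eqn_pmul2l // => /eqP.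
Qed.

Lemma ptiling_base y : 0 < y -> ptiling 0 y [:: 0] (iota 0 (p ^ y)).
Proof.
move=> y_gt0; split=> //.
- exact: iota_ltn_sorted.
- split.
  + by move=> a b; rewrite inE mem_iota => /eqP -> /andP [_]; rewrite add0n.
  + by move=> z lt_zN; exists 0, z; rewrite inE mem_iota add0n lt_zN.
  + by move=> a b a' b'; rewrite !inE => /eqP -> _ /eqP ->.
- by rewrite mem_iota add0n pexpn_gt1.
Qed.

Lemma ptiling0 y A B : ptiling 0 y A B -> A = [:: 0] /\ B = iota 0 (p ^ y).
Proof.
case=> _ sB tAB szA _; have [A0 B0] := tiling_mem0 tAB (pexpn_gt0 _).
have A_eq : A = [:: 0].
  by move: szA A0; rewrite expn0; case: (A) => [|a [|]] //= _; rewrite inE => /eqP <-.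
split=> //; apply: (irr_sorted_eq ltn_trans ltnn sB (iota_ltn_sorted 0 _)) => z.
case: tAB => lt_AB cover_AB _; rewrite mem_iota add0n.
apply/idP/idP => [zB | /cover_AB [a [b [+ bB ->]]]]; first by rewrite -[z]add0n lt_AB.
by rewrite A_eq inE => /eqP ->.
Qed.

Lemma ptiling_expand x y j A B : j < y -> ptiling j x B A ->
  ptiling x y (dilate (p ^ (y - j)) A) (blocks (p ^ (y - j)) (p ^ (j + x)) B).
Proof.
move=> lt_jy ptBA; have [sB sA tBA szB oneA] := ptBA.
have m_gt0 := pexpn_gt0 (y - j).
split.
- exact: sorted_dilate.
- exact: sorted_blocks.
- have -> : p ^ (x + y) = p ^ (y - j) * p ^ (j + x) by rewrite -expnD; congr (p ^ _); lia.
  exact/tiling_dilate_blocks/tiling_sym.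
- by rewrite size_dilate (ptiling_size2 ptBA).
- have [B0 _] := tiling_mem0 tBA (pexpn_gt0 _).
  rewrite mem_blocks divn_small ?B0 ?andbT ?pexpn_gt1 ?subn_gt0 //.
  by rewrite -expnD pexpn_gt1 //; lia.
Qed.

Lemma ptiling_contract x y A B : 0 < x -> ptiling x y A B ->
  exists2 j, j < y & exists B' A', [/\ ptiling j x B' A',
    A = dilate (p ^ (y - j)) A' & B = blocks (p ^ (y - j)) (p ^ (j + x)) B'].
Proof.
move=> x_gt0 [sA sB tAB szA oneB].
have [A0 B0] := tiling_mem0 tAB (pexpn_gt0 _).
have [m [mA m_gt0 m_min]] : exists m, [/\ m \in A, 0 < m & {in A, forall a, 0 < a -> m <= a}].
  apply: least_pos; first exact: (sorted_uniq ltn_trans ltnn sA).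
  by rewrite szA pexpn_gt1.
have m_neq1 : m != 1.
  apply/eqP => m1; have [_ _ /(_ 1 0 0 1)] := tAB.
  by rewrite -{1}m1 => /(_ mA B0 A0 oneB erefl).
have m_dvd : m * size (contract m (p ^ (x + y) %/ m) B) = p ^ y.
  apply/eqP; rewrite -(eqn_pmul2l (pexpn_gt0 x)) mulnCA -expnD -szA.
  by rewrite (size_contract tAB A0 B0 mA m_gt0 m_min sA sB).
have /(dvdn_pfactor _ _ p_prime) [k le_ky m_eq] : m %| p ^ y by rewrite -m_dvd dvdn_mulr.
have k_gt0 : 0 < k by rewrite lt0n; apply: contraNneq m_neq1 => k0; rewrite m_eq k0.
have N'_eq : p ^ (x + y) %/ m = p ^ (y - k + x).
  rewrite m_eq -expnB ?prime_gt0 //; last by lia.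
  by congr (p ^ _); lia.
exists (y - k); first by lia.
rewrite subKn // -m_eq -N'_eq.
exists (contract m (p ^ (x + y) %/ m) B), (contract m (p ^ (x + y) %/ m) A); split.
- split; [exact: sorted_contract | exact: sorted_contract | | | ].
  + by rewrite -N'_eq; apply/tiling_sym/(tiling_contract tAB A0 B0 mA m_gt0 m_min).
  + by apply/eqP; rewrite -(eqn_pmul2l m_gt0) m_dvd m_eq -expnD subnKC.
  + by rewrite mem_contract mul1n mA andbT N'_eq pexpn_gt1 //; lia.
- by rewrite (dilate_contract tAB A0 B0 mA m_gt0 m_min sA).
- by rewrite (blocks_contract tAB A0 B0 mA m_gt0 m_min sB).
Qed.

Lemma expand_inj x y j j' A A' B B' : j < y -> j' < y ->
  ptiling j x B A -> ptiling j' x B' A' ->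
  (dilate (p ^ (y - j)) A, blocks (p ^ (y - j)) (p ^ (j + x)) B) =
  (dilate (p ^ (y - j')) A', blocks (p ^ (y - j')) (p ^ (j' + x)) B') ->
  j = j' /\ (B, A) = (B', A').
Proof.
move=> lt_jy lt_j'y [sB _ tBA _ oneA] [sB' _ tBA' _ oneA'] [eA eB].
have dvd_exp j1 j2 A1 A2 : 1 \in A1 ->
    dilate (p ^ (y - j1)) A1 = dilate (p ^ (y - j2)) A2 -> p ^ (y - j2) %| p ^ (y - j1).
  move=> oneA1 e; have := mem_dilate_mul (pexpn_gt0 (y - j1)) A1 1.
  by rewrite mul1n oneA1 e mem_dilate // => /andP [].
have := dvd_exp _ _ _ _ oneA eA; have := dvd_exp _ _ _ _ oneA' (esym eA).
rewrite !dvdn_Pexp2l ?prime_gt1 // => le1 le2; have j'_eq : j' = j by lia.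
subst j'; split=> //; congr pair; last exact: dilate_inj eA.
have [ltB _] := tiling_ltn tBA (pexpn_gt0 _); have [ltB' _] := tiling_ltn tBA' (pexpn_gt0 _).
have memB B1 q : {in B1, forall b, b < p ^ (j + x)} ->
    (q \in B1) = (q * p ^ (y - j) \in blocks (p ^ (y - j)) (p ^ (j + x)) B1).
  move=> ltB1; rewrite mem_blocks_mul //.
  by case: (boolP (q \in B1)) => [/ltB1 -> | _]; rewrite ?andbF.
apply: (irr_sorted_eq ltn_trans ltnn sB sB') => q.
by rewrite memB // eB -memB.
Qed.

Lemma ptilings_sound fuel x y A B : x + y <= fuel -> 0 < y ->
  (A, B) \in ptilings fuel x y -> [/\ ptiling x y A B, symmetric_set A & symmetric_set B].
Proof.
elim: fuel x y A B => [|fuel IH] [|x] y A B le_f y_gt0 //=;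
  try by rewrite inE => /eqP [-> ->]; split;
    [exact: ptiling_base | exact: symmetric_set_zero | exact: symmetric_iota].
case/allpairsPdep => j [[B' A'] [+ BA'_in [-> ->]]]; rewrite mem_iota add0n => lt_jy.
have [ptBA symB symA] := IH j x.+1 B' A' ltac:(lia) (ltn0Sn x) BA'_in.
have [_ _ tBA _ _] := ptBA; have [ltB _] := tiling_ltn tBA (pexpn_gt0 _).
split; first exact: ptiling_expand.
- by apply: symmetric_dilate symA.
- by apply: symmetric_blocks ltB symB.
Qed.

Lemma ptilings_complete fuel x y A B : x + y <= fuel -> 0 < y ->
  ptiling x y A B -> (A, B) \in ptilings fuel x y.
Proof.
elim: fuel x y A B => [|fuel IH] [|x] y A B le_f y_gt0 ptAB.
- by have [-> ->] := ptiling0 ptAB; rewrite inE.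
- by rewrite addSn in le_f.
- by have [-> ->] := ptiling0 ptAB; rewrite inE.
have [j lt_jy [B' [A' [ptBA -> ->]]]] := ptiling_contract (ltn0Sn x) ptAB.
apply/allpairsPdep; exists j, (B', A'); rewrite mem_iota; split=> //.
by apply: IH => //; lia.
Qed.

Lemma uniq_ptilings fuel x y : x + y <= fuel -> 0 < y -> uniq (ptilings fuel x y).
Proof.
elim: fuel x y => [|fuel IH] [|x] y le_f y_gt0 //=.
apply: allpairs_uniq_dep => [|j|]; first exact: iota_uniq.
  by rewrite mem_iota => /andP [_ lt_jy]; apply: IH => //; lia.
move=> u v /allpairsPdep [j1 [[B1 A1] [j1_in BA1_in ->]]].
move=> /allpairsPdep [j2 [[B2 A2] [j2_in BA2_in ->]]] /=.
move: j1_in j2_in; rewrite !mem_iota => lt_j1 lt_j2.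
have [pt1 _ _] := ptilings_sound (ltac:(lia) : j1 + x.+1 <= fuel) (ltn0Sn x) BA1_in.
have [pt2 _ _] := ptilings_sound (ltac:(lia) : j2 + x.+1 <= fuel) (ltn0Sn x) BA2_in.
by move/(expand_inj lt_j1 lt_j2 pt1 pt2) => [j_eq]; subst j2 => ->.
Qed.

Lemma size_ptilings fuel x y : x + y <= fuel -> size (ptilings fuel x y) = 'C((x + y).-1, x).
Proof.
elim: fuel x y => [|fuel IH] [|x] y le_f /=; [by rewrite bin0 | lia | by rewrite bin0 |].
rewrite size_allpairs_dep -hockey_stick; congr sumn.
apply/eq_in_map => j; rewrite mem_iota => /andP [_ lt_jy].
by rewrite IH ?addnS //; lia.
Qed.

Lemma ptiling_square x A B : ptiling x x A B <-> square_tiling (p ^ x) A B /\ 1 \in B.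
Proof.
rewrite /square_tiling -expnM muln2 -addnn.
split=> [ptAB | [[sA sB tAB szA szB] oneB]]; last by split.
by have szB := ptiling_size2 ptAB; case: ptAB.
Qed.

End PrimePowerTilings.

(** * Principal reversible squares as tilings *)

Lemma nth0_sorted (s : seq nat) : sorted ltn s -> 0 \in s -> nth 0 s 0 = 0.
Proof.
case: s => [|h t] //= st; rewrite inE => /predU1P [-> //|zt].
by have /allP /(_ _ zt) := order_path_min ltn_trans st.
Qed.

Lemma nth1_sorted (s : seq nat) : sorted ltn s -> 0 \in s -> 1 \in s -> nth 0 s 1 = 1.
Proof.
move=> st s0; have := nth0_sorted st s0.
case: s st {s0} => [|h [|h' t]] //= st -> //; rewrite !inE //= => s1.
move: st => /andP [lt_0h' /(order_path_min ltn_trans)/allP min_h'].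
by case/predU1P: s1 => [<- // | /min_h']; lia.
Qed.

Lemma symmetric_set_nth (L : seq nat) : sorted ltn L -> symmetric_set L ->
  exists c, forall i, i < size L -> nth 0 L i + nth 0 L (size L - i.+1) = c.
Proof.
move=> sL [c symL]; exists c => i lt_iL.
have le_c z : z \in L -> z <= c by rewrite symL => /andP [].
have rev_L : rev [seq c - z | z <- L] = L.
  apply: (irr_sorted_eq ltn_trans ltnn) => // [|z].
    rewrite rev_sorted; apply: (homo_sorted_in (e := ltn) (P := [pred z | z <= c])) => //.
      by move=> u v; rewrite !inE /= => le_uc le_vc lt_uv; lia.
    exact/allP.
  rewrite mem_rev; apply/mapP/idP => [[w wL ->] | zL].
    by move: wL; rewrite symL => /andP [].
  by exists (c - z); [move: zL; rewrite symL => /andP [] | have := le_c _ zL; lia].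
have lt_jL : size L - i.+1 < size L by lia.
have nth_i : nth 0 L i = c - nth 0 L (size L - i.+1).
  by rewrite -{1}rev_L nth_rev size_map // (nth_map 0).
by rewrite nth_i subnK // le_c // mem_nth.
Qed.

Lemma onto_iota_inj (T : finType) (f : T -> nat) k :
  (forall z, k <= z < k + #|T| -> exists x, f x = z) -> injective f.
Proof.
move=> onto; apply/injectiveP; apply: (leq_size_uniq (iota_uniq k #|T|)).
  by move=> z; rewrite mem_iota => /onto [x <-]; apply: map_f; rewrite mem_enum.
by rewrite size_map -cardE size_iota.
Qed.

Lemma sorted_map_enum_ord n (f : 'I_n -> nat) :
  {homo f : i j / i < j} -> sorted ltn [seq f i | i <- enum 'I_n].
Proof.
move=> f_mono; rewrite sorted_map; apply: (@sub_sorted _ (relpre val ltn)).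
  by move=> i j /f_mono.
by have := iota_ltn_sorted 0 n; rewrite -val_enum_ord sorted_map.
Qed.

Local Open Scope ring_scope.

Definition tiling_mx (R : realType) (n : nat) (AB : seq nat * seq nat) : 'M[R]_n :=
  \matrix_(i, j) (nth 0%N AB.1 i + nth 0%N AB.2 j).+1%:R.

Section TilingMatrix.
Variables (R : realType) (n : nat).
Hypothesis n_gt1 : (1 < n)%N.

Let n_gt0 : (0 < n)%N := ltnW n_gt1.
Let i0 : 'I_n := Ordinal n_gt0.
Let i1 : 'I_n := Ordinal n_gt1.

Lemma tiling_mx_prs A B : square_tiling n A B -> (1 \in B)%N ->
  symmetric_set A -> symmetric_set B -> principal_reversible_square (tiling_mx R n (A, B)).
Proof.
move=> [sA sB tAB szA szB] oneB symA symB.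
have [A0 B0] : 0%N \in A /\ 0%N \in B by apply: tiling_mem0 tAB _; rewrite expn_gt0 n_gt0.
have [lt_AB cover_AB _] := tAB.
have [cA revA] := symmetric_set_nth sA symA; have [cB revB] := symmetric_set_nth sB symB.
rewrite szA in revA; rewrite szB in revB.
have nthA (i : 'I_n) : nth 0%N A i \in A by rewrite mem_nth ?szA.
have nthB (j : 'I_n) : nth 0%N B j \in B by rewrite mem_nth ?szB.
split; [split; [split|] | split].
- move=> i j k; rewrite !mxE /= -!natrD; congr _%:R.
  by have := revB j (ltn_ord j); have := revB k (ltn_ord k); lia.
- move=> i j k; rewrite !mxE /= -!natrD; congr _%:R.
  by have := revA i (ltn_ord i); have := revA k (ltn_ord k); lia.
- by move=> i j k l; rewrite !mxE /= -!natrD; congr _%:R; lia.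
- by move=> i j; rewrite mxE; eexists; split; last reflexivity; rewrite /= lt_AB.
- move=> z /andP [z_gt0 le_zn]; have [a [b [aA bB z_eq]]] := cover_AB z.-1 ltac:(lia).
  have lt_aA : (index a A < n)%N by rewrite -szA index_mem.
  have lt_bB : (index b B < n)%N by rewrite -szB index_mem.
  by exists (Ordinal lt_aA), (Ordinal lt_bB); rewrite mxE /= !nth_index // -z_eq prednK.
- split=> [i j k lt_jk | i j k lt_ik]; rewrite !mxE ltr_nat ltnS /=.
  + by rewrite ltn_add2l (sorted_ltn_nth ltn_trans) // inE szB.
  + by rewrite ltn_add2r (sorted_ltn_nth ltn_trans) // inE szA.
- by move=> i j i_0 j_0; rewrite mxE /= i_0 j_0 !nth0_sorted.
- by move=> i j i_0 j_1; rewrite mxE /= i_0 j_1 modn_small // nth0_sorted // nth1_sorted.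
Qed.

Lemma tiling_mx_inj A B A' B' : square_tiling n A B -> square_tiling n A' B' ->
  tiling_mx R n (A, B) = tiling_mx R n (A', B') -> (A, B) = (A', B').
Proof.
move=> [sA sB tAB szA szB] [sA' sB' tAB' szA' szB'] eM.
have n2_gt0 : (0 < n ^ 2)%N by rewrite expn_gt0 n_gt0.
have [A0 B0] := tiling_mem0 tAB n2_gt0; have [A0' B0'] := tiling_mem0 tAB' n2_gt0.
have eq_sum (i j : 'I_n) : (nth 0 A i + nth 0 B j = nth 0 A' i + nth 0 B' j)%N.
  by have /matrixP/(_ i j)/eqP := eM; rewrite !mxE eqr_nat eqSS => /eqP.
congr pair; apply: (@eq_from_nth _ 0%N); rewrite ?szA ?szB ?szA' ?szB' // => k lt_kn.
  by have := eq_sum (Ordinal lt_kn) i0; rewrite /= !nth0_sorted // !addn0.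
by have := eq_sum i0 (Ordinal lt_kn); rewrite /= !nth0_sorted.
Qed.

Section PrincipalSquare.
Variable M : 'M[R]_n.
Hypothesis prsM : principal_reversible_square M.

Let E i j := Num.trunc (M i j).

Let ME i j : M i j = (E i j)%:R.
Proof. by have [_ [/(_ i j) [k [_ Mk]] _ _ _ _]] := prsM; rewrite /E Mk natrK. Qed.

Let eqE i j k : (M i j = k%:R) <-> E i j = k.
Proof. by rewrite ME; split=> [/eqP | ->] //; rewrite eqr_nat => /eqP. Qed.

Let E_bound i j : (0 < E i j <= n ^ 2)%N.
Proof. by have [_ [/(_ i j) [k [k_bound /eqE ->]] _ _ _ _]] := prsM. Qed.

Let E_onto z : (0 < z <= n ^ 2)%N -> exists i j, E i j = z.
Proof.
have [_ [_ onto _ _ _]] := prsM.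
by case/onto => i [j /eqE]; exists i, j.
Qed.

Let E_inj : injective (fun ij : 'I_n * 'I_n => E ij.1 ij.2).
Proof.
apply: (@onto_iota_inj _ _ 1) => z; rewrite card_prod card_ord => z_bound.
by have [|i [j <-]] := @E_onto z; [lia | exists (i, j)].
Qed.

Let E_add i j : E i j = ((E i i0).-1 + (E i0 j).-1).+1.
Proof.
have [[_ vert] [_ _ _ M00 _]] := prsM.
have E00 : E i0 i0 = 1%N by apply/eqE; exact: M00.
have := vert i j i0 i0; rewrite !ME E00 -!natrD => /eqP; rewrite eqr_nat => /eqP.
by have := E_bound i i0; have := E_bound i0 j; lia.
Qed.

Lemma prs_square_tiling :
  exists A B, [/\ square_tiling n A B, (1 \in B)%N & M = tiling_mx R n (A, B)].
Proof.
have [_ [_ _ [incr_row incr_col] _ M01]] := prsM.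
pose A := [seq (E i i0).-1 | i <- enum 'I_n]; pose B := [seq (E i0 j).-1 | j <- enum 'I_n].
have nthA (i : 'I_n) : nth 0%N A i = (E i i0).-1.
  by rewrite (nth_map i0) ?nth_ord_enum ?size_enum_ord.
have nthB (j : 'I_n) : nth 0%N B j = (E i0 j).-1.
  by rewrite (nth_map i0) ?nth_ord_enum ?size_enum_ord.
have predE_lt i j k l : M i j < M k l -> ((E i j).-1 < (E k l).-1)%N.
  by rewrite !ME ltr_nat; have := E_bound i j; have := E_bound k l; lia.
exists A, B; split; last first.
- by apply/matrixP => i j; rewrite mxE nthA nthB -E_add ME.
- apply/mapP; exists i1; first by rewrite mem_enum.
  by have /eqE -> := M01 i0 i1 erefl (esym (modn_small n_gt1)).
split; rewrite ?size_map -?enumT ?size_enum_ord //.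
- by apply: sorted_map_enum_ord => i k /incr_col /predE_lt.
- by apply: sorted_map_enum_ord => j k /incr_row /predE_lt.
split.
- move=> _ _ /mapP [i _ ->] /mapP [j _ ->].
  by have := E_add i j; have := E_bound i j; lia.
- move=> z lt_zn; have [|i [j Ez]] := @E_onto z.+1; first by lia.
  exists (E i i0).-1, (E i0 j).-1; split; try exact/map_f/mem_enum.
  by move: (E_add i j); rewrite Ez => -[].
- move=> _ _ _ _ /mapP [i _ ->] /mapP [j _ ->] /mapP [k _ ->] /mapP [l _ ->] e.
  have : E i j = E k l by rewrite E_add (E_add k l) e.
  by move/(@E_inj (i, j) (k, l)) => [->].
Qed.

End PrincipalSquare.

End TilingMatrix.

Theorem corollary4 (R : realType) (p a : nat) :
  prime p -> (0 < a)%N ->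
  exists s : seq 'M[R]_(p ^ a),
    [/\ uniq s,
        (forall M : 'M[R]_(p ^ a), M \in s <-> principal_reversible_square M) &
        size s = 'C((2 * a).-1, a)].
Proof.
move=> p_prime a_gt0.
have n_gt1 : (1 < p ^ a)%N by rewrite -[1%N](expn0 p) ltn_exp2l ?prime_gt1.
have tilings_ok A B : (A, B) \in ptilings p (a + a) a a ->
    [/\ ptiling p a a A B, symmetric_set A & symmetric_set B].
  exact: ptilings_sound.
exists [seq tiling_mx R (p ^ a) AB | AB <- ptilings p (a + a) a a]; split.
- rewrite map_inj_in_uniq ?uniq_ptilings // => -[A B] [A' B'].
  move=> /tilings_ok [/(ptiling_square p_prime) [sqAB _] _ _].
  move=> /tilings_ok [/(ptiling_square p_prime) [sqAB' _] _ _].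
  exact: tiling_mx_inj.
- move=> M; split=> [/mapP [[A B] /tilings_ok [ptAB symA symB] ->] | prsM].
    by move: ptAB => /(ptiling_square p_prime) [sqAB oneB]; apply: tiling_mx_prs.
  have [A [B [sqAB oneB ->]]] := prs_square_tiling n_gt1 prsM.
  by apply/map_f/ptilings_complete => //; apply/ptiling_square.
- by rewrite size_map size_ptilings // addnn mul2n.
Qed.
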